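(* Let $\rho_m>0$, $f(\rho)=\rho_m-\rho$, and $0<\bar\rho<\frac{\rho_m}{2}$. There exist $K,c>0$ such that for any $T>0$ and any initial data $\psi_0,\varphi_T$, the linear system \[ \begin{cases} \partial_t\psi=(f(\bar\rho)-2\bar\rho)\partial_x\psi+\bar\rho f^2(\bar\rho)\Delta\varphi, & t\in(0,T),\\ \partial_t\varphi=f(\bar\rho)\partial_x\varphi-\frac{1}{f(\bar\rho)}\psi, & t\in(0,T),\\ \psi(\cdot,0)=\psi_0,\quad \varphi(\cdot,T)=\varphi_T & \end{cases} \] on $\mathbb{R}^2$ admits a solution on $[0,T]$ that satisfies, for all $\xi\in\mathbb{R}^2$ and $t\in[0,T]$, \[ (|\hat\psi|+|\xi\hat\varphi|)(\xi,t)\leqslant K\big(e^{-c|\xi|t}|\hat\psi_0(\xi)|+e^{-c|\xi|(T-t)}|\xi\hat\varphi_T(\xi)|\big). \]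
   Context: $\hat g(\xi,t)$ denotes the Fourier transform in the space variables $(x,y)\in\mathbb{R}^2$, $\xi=(\xi_1,\xi_2)$. A solution is understood frequency by frequency: for each $\xi\neq0$, $t\mapsto(\hat\psi,\hat\varphi)(\xi,t)$ solves the Fourier-transformed ODE system with $\hat\psi(\xi,0)=\hat\psi_0(\xi)$ and $\hat\varphi(\xi,T)=\hat\varphi_T(\xi)$. *)

From Stdlib Require Import Reals.
From Coquelicot Require Import Coquelicot.
Open Scope R_scope.

Definition flux (rho_m rho : R) : R := rho_m - rho.

Definition xnorm (xi : R * R) : R := sqrt (fst xi ^ 2 + snd xi ^ 2).

(* Fourier symbols (convention  g^(xi) = \int g(x) e^{-i x.xi} dx):
   d/dx -> i xi_1,   Laplacian -> - |xi|^2. *)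

Definition rhs_psi (rho_m rb : R) (xi : R * R) (p q : C) : C :=
  Cplus (Cmult (Cmult Ci (RtoC ((flux rho_m rb - 2 * rb) * fst xi))) p)
        (Cmult (RtoC (- (rb * (flux rho_m rb) ^ 2 * (xnorm xi) ^ 2))) q).

Definition rhs_phi (rho_m rb : R) (xi : R * R) (p q : C) : C :=
  Cplus (Cmult (Cmult Ci (RtoC (flux rho_m rb * fst xi))) q)
        (Cmult (RtoC (- (/ flux rho_m rb))) p).

Definition solves_freq (rho_m rb T : R) (xi : R * R) (a b : C)
    (psi phi : R -> C) : Prop :=
  (forall t, 0 <= t <= T -> continuous psi t /\ continuous phi t) /\
  (forall t, 0 < t < T ->
      is_derive psi t (rhs_psi rho_m rb xi (psi t) (phi t)) /\
      is_derive phi t (rhs_phi rho_m rb xi (psi t) (phi t))) /\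
  psi 0 = a /\ phi T = b.

From Stdlib Require Import Reals Lra Psatz.
From Coquelicot Require Import Coquelicot.
Open Scope R_scope.

(* At a frequency [xi <> 0] write [F = f(rb)] and [n = |xi|]. The system is linear with
   constant coefficients; its eigenvalues are [i (F - rb) xi_1 -+ s] with
   [s^2 = rb (F n^2 - rb xi_1^2) >= rb (F - rb) n^2], and [(F (+-s + i rb xi_1), 1)] are
   eigenvectors whose first component has modulus [F sqrt (rb F) n]. Anchoring the decaying
   mode at [t = 0] and the growing one at [t = T] gives them moduli [e^(-s t)] and
   [e^(-s (T - t))]. The determinant of the boundary conditions has real part at least
   [F s >= F c n] with [c = sqrt (rb (F - rb))], so both coefficients are bounded by the data,
   the cross-terms carrying an extra factor [e^(-s T)]. *)

Lemma xnorm_nonneg (xi : R * R) : 0 <= xnorm xi.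
Proof. apply sqrt_pos. Qed.

Lemma xnorm_pos (xi : R * R) : xi <> (0, 0) -> 0 < xnorm xi.
Proof.
  intros Hxi. destruct (xnorm_nonneg xi) as [Hpos | H0]; [exact Hpos|].
  exfalso. apply Hxi. destruct xi as [x1 x2]. unfold xnorm in H0; cbn [fst snd] in H0.
  symmetry in H0. apply sqrt_eq_0 in H0; [|nra].
  f_equal; nra.
Qed.

Lemma fst_sq_le_xnorm_sq (xi : R * R) : fst xi ^ 2 <= xnorm xi ^ 2.
Proof. unfold xnorm. rewrite pow2_sqrt by nra. nra. Qed.

Lemma exp_le_compat (u v : R) : u <= v -> exp u <= exp v.
Proof. intros [H | ->]; [left; apply exp_increasing, H | right; reflexivity]. Qed.

Lemma Cmod_eq_of_sq (z : C) (r : R) : 0 <= r -> Re z ^ 2 + Im z ^ 2 = r ^ 2 -> Cmod z = r.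
Proof. intros Hr Hz. unfold Cmod. unfold Re, Im in Hz. rewrite Hz. apply sqrt_pow2, Hr. Qed.

Lemma is_derive_C_components (u v : R -> R) (du dv x : R) :
  is_derive u x du -> is_derive v x dv ->
  @is_derive R_AbsRing C_R_NormedModule (fun t => (u t, v t)) x (du, dv).
Proof.
  intros Hu Hv.
  pose proof (@is_derive_plus R_AbsRing C_R_NormedModule _ _ x _ _
     (@is_derive_scal_l R_AbsRing C_R_NormedModule u x du (1, 0) Hu)
     (@is_derive_scal_l R_AbsRing C_R_NormedModule v x dv (0, 1) Hv)) as H.
  cbn -[is_derive] in H; unfold prod_plus, prod_scal in H; cbn -[is_derive] in H.
  replace (du, dv) with (du * 1 + dv * 0, du * 0 + dv * 1) by (f_equal; ring).
  eapply is_derive_ext; [|exact H].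
  intros t; cbn; f_equal; ring.
Qed.

Definition Cexp (z : C) : C := (exp (Re z) * cos (Im z), exp (Re z) * sin (Im z)).

Lemma Cexp_0 : Cexp 0 = 1%C.
Proof. unfold Cexp, RtoC; cbn. rewrite exp_0, cos_0, sin_0. f_equal; ring. Qed.

Lemma Cexp_add (z w : C) : Cexp (z + w) = (Cexp z * Cexp w)%C.
Proof.
  unfold Cexp, Cmult; cbn. rewrite exp_plus, cos_plus, sin_plus. unfold Re, Im. f_equal; ring.
Qed.

Lemma Cexp_RtoC (r : R) : Cexp (RtoC r) = RtoC (exp r).
Proof. unfold Cexp, RtoC; cbn. rewrite cos_0, sin_0. f_equal; ring. Qed.

Lemma Cmod_Cexp (z : C) : Cmod (Cexp z) = exp (Re z).
Proof.
  unfold Cmod, Cexp; cbn [fst snd].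
  replace (_ ^ 2 + _ ^ 2) with (exp (Re z) ^ 2 * ((sin (Im z))² + (cos (Im z))²))
    by (unfold Rsqr; ring).
  rewrite sin2_cos2, Rmult_1_r. apply sqrt_pow2. left; apply exp_pos.
Qed.

Lemma Cmod_Cexp_mul_RtoC (l : C) (r : R) : Cmod (Cexp (l * RtoC r)) = exp (Re l * r).
Proof. rewrite Cmod_Cexp. f_equal. unfold Re, RtoC, Cmult; cbn. ring. Qed.

Lemma is_derive_Cexp_mode (k l : C) (t0 t : R) :
  is_derive (fun t => (k * Cexp (l * RtoC (t - t0)))%C) t
            (l * (k * Cexp (l * RtoC (t - t0))))%C.
Proof.
  destruct k as [k1 k2], l as [l1 l2].
  unfold Cexp, Cmult, RtoC, Re, Im; cbn [fst snd].
  apply is_derive_C_components; unfold Rminus; auto_derive; auto; ring.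
Qed.

Section Superposition.

Variables (rho_m rb : R) (xi : R * R).

Definition eigenmode (l e : C) : Prop :=
  (l * e)%C = rhs_psi rho_m rb xi e 1 /\ l = rhs_phi rho_m rb xi e 1.

Variables (l1 l2 e1 e2 : C) (t1 t2 : R).

Definition superpose_psi (A B : C) (t : R) : C :=
  (A * e1 * Cexp (l1 * RtoC (t - t1)) + B * e2 * Cexp (l2 * RtoC (t - t2)))%C.

Definition superpose_phi (A B : C) (t : R) : C :=
  (A * Cexp (l1 * RtoC (t - t1)) + B * Cexp (l2 * RtoC (t - t2)))%C.

Lemma is_derive_superpose (A B : C) (t : R) :
  eigenmode l1 e1 -> eigenmode l2 e2 ->
  is_derive (superpose_psi A B) t
    (rhs_psi rho_m rb xi (superpose_psi A B t) (superpose_phi A B t)) /\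
  is_derive (superpose_phi A B) t
    (rhs_phi rho_m rb xi (superpose_psi A B t) (superpose_phi A B t)).
Proof.
  intros [Hpsi1 Hphi1] [Hpsi2 Hphi2].
  unfold superpose_psi, superpose_phi.
  set (E1 := Cexp (l1 * RtoC (t - t1))); set (E2 := Cexp (l2 * RtoC (t - t2))).
  split.
  - replace (rhs_psi _ _ _ _ _) with (l1 * (A * e1 * E1) + l2 * (B * e2 * E2))%C.
    + apply (@is_derive_plus R_AbsRing C_R_NormedModule); apply is_derive_Cexp_mode.
    + transitivity ((A * E1) * (l1 * e1) + (B * E2) * (l2 * e2))%C; [ring|].
      rewrite Hpsi1, Hpsi2; unfold rhs_psi; ring.
  - replace (rhs_phi _ _ _ _ _) with (l1 * (A * E1) + l2 * (B * E2))%C.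
    + apply (@is_derive_plus R_AbsRing C_R_NormedModule); apply is_derive_Cexp_mode.
    + rewrite Hphi1 at 1; rewrite Hphi2 at 1; unfold rhs_phi; ring.
Qed.

Lemma Cmod_superpose_psi (A B : C) (t : R) :
  Cmod (superpose_psi A B t) <=
  Cmod A * Cmod e1 * exp (Re l1 * (t - t1)) + Cmod B * Cmod e2 * exp (Re l2 * (t - t2)).
Proof.
  unfold superpose_psi. eapply Rle_trans; [apply Cmod_triangle|].
  rewrite !Cmod_mult, !Cmod_Cexp_mul_RtoC. lra.
Qed.

Lemma Cmod_superpose_phi (A B : C) (t : R) :
  Cmod (superpose_phi A B t) <=
  Cmod A * exp (Re l1 * (t - t1)) + Cmod B * exp (Re l2 * (t - t2)).
Proof.
  unfold superpose_phi. eapply Rle_trans; [apply Cmod_triangle|].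
  rewrite !Cmod_mult, !Cmod_Cexp_mul_RtoC. lra.
Qed.

End Superposition.

Section BoundaryValueProblem.

Variables (rho_m rb T : R) (xi : R * R) (l1 l2 e1 e2 : C).

Definition bvp_den : C := (e1 - e2 * Cexp (l2 * RtoC (- T)) * Cexp (l1 * RtoC T))%C.

Definition bvp_coef1 (a b : C) : C := ((a - e2 * Cexp (l2 * RtoC (- T)) * b) / bvp_den)%C.

Definition bvp_coef2 (a b : C) : C := (b - bvp_coef1 a b * Cexp (l1 * RtoC T))%C.

Definition bvp_psi (a b : C) : R -> C :=
  superpose_psi l1 l2 e1 e2 0 T (bvp_coef1 a b) (bvp_coef2 a b).

Definition bvp_phi (a b : C) : R -> C :=
  superpose_phi l1 l2 0 T (bvp_coef1 a b) (bvp_coef2 a b).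

Lemma bvp_solves (a b : C) :
  eigenmode rho_m rb xi l1 e1 -> eigenmode rho_m rb xi l2 e2 -> bvp_den <> 0%C ->
  solves_freq rho_m rb T xi a b (bvp_psi a b) (bvp_phi a b).
Proof.
  intros He1 He2 Hden.
  assert (Hder := fun t => is_derive_superpose rho_m rb xi l1 l2 e1 e2 0 T
                             (bvp_coef1 a b) (bvp_coef2 a b) t He1 He2).
  split; [|split; [|split]].
  - intros t _; split.
    + exact (@ex_derive_continuous R_AbsRing C_R_NormedModule _ t
               (ex_intro _ _ (proj1 (Hder t)))).
    + exact (@ex_derive_continuous R_AbsRing C_R_NormedModule _ t
               (ex_intro _ _ (proj2 (Hder t)))).
  - intros t _; apply Hder.
  - unfold bvp_psi, superpose_psi, bvp_coef2, bvp_coef1.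
    rewrite Rminus_diag, Rminus_0_l, Cmult_0_r, Cexp_0.
    unfold bvp_den in *; field; exact Hden.
  - unfold bvp_phi, superpose_phi, bvp_coef2.
    rewrite Rminus_diag, Rminus_0_r, Cmult_0_r, Cexp_0.
    ring.
Qed.

End BoundaryValueProblem.

Section Spectrum.

Variables (rho_m rb s : R) (xi : R * R).

Definition eigval_minus : C := (- s, (flux rho_m rb - rb) * fst xi).
Definition eigval_plus : C := (s, (flux rho_m rb - rb) * fst xi).
Definition eigvec_minus : C := (flux rho_m rb * s, flux rho_m rb * (rb * fst xi)).
Definition eigvec_plus : C := (- flux rho_m rb * s, flux rho_m rb * (rb * fst xi)).

Hypotheses (Hflux : 0 < flux rho_m rb)
  (Hs : s * s = rb * (flux rho_m rb * xnorm xi ^ 2 - rb * fst xi ^ 2)).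

Lemma eigenmode_minus : eigenmode rho_m rb xi eigval_minus eigvec_minus.
Proof.
  split; unfold eigval_minus, eigvec_minus, rhs_psi, rhs_phi, Cmult, Cplus, Ci, RtoC; cbn;
    f_equal; [nra | ring | field; lra | field; lra].
Qed.

Lemma eigenmode_plus : eigenmode rho_m rb xi eigval_plus eigvec_plus.
Proof.
  split; unfold eigval_plus, eigvec_plus, rhs_psi, rhs_phi, Cmult, Cplus, Ci, RtoC; cbn;
    f_equal; [nra | ring | field; lra | field; lra].
Qed.

Lemma Re_bvp_den_spectrum (T : R) :
  Re (bvp_den T eigval_minus eigval_plus eigvec_minus eigvec_plus) =
  flux rho_m rb * s * (1 + exp (- (2 * s * T))).
Proof.
  unfold bvp_den. rewrite <- Cmult_assoc, <- Cexp_add.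
  replace (eigval_plus * RtoC (- T) + eigval_minus * RtoC T)%C with (RtoC (- (2 * s * T)))
    by (unfold eigval_plus, eigval_minus, RtoC, Cmult, Cplus; cbn; f_equal; ring).
  rewrite Cexp_RtoC. unfold eigvec_minus, eigvec_plus, RtoC, Cmult, Cminus, Cplus, Copp, Re.
  cbn. ring.
Qed.

Lemma bvp_den_spectrum_lower (T : R) :
  0 < s ->
  flux rho_m rb * s <= Cmod (bvp_den T eigval_minus eigval_plus eigvec_minus eigvec_plus).
Proof.
  intros Hs0.
  assert (HFs : 0 < flux rho_m rb * s) by (apply Rmult_lt_0_compat; lra).
  pose proof (exp_pos (- (2 * s * T))).
  eapply Rle_trans; [|apply re_le_Cmod].
  rewrite Re_bvp_den_spectrum, Rabs_pos_eq; nra.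
Qed.

Lemma Cmod_eigvec_minus :
  0 <= rb -> Cmod eigvec_minus = flux rho_m rb * sqrt (rb * flux rho_m rb) * xnorm xi.
Proof.
  intros Hrb. apply Cmod_eq_of_sq.
  - apply Rmult_le_pos; [apply Rmult_le_pos; [lra | apply sqrt_pos] | apply xnorm_nonneg].
  - unfold eigvec_minus, Re, Im; cbn [fst snd].
    rewrite !Rpow_mult_distr, pow2_sqrt by (apply Rmult_le_pos; lra).
    transitivity (flux rho_m rb ^ 2 * (s * s + rb ^ 2 * fst xi ^ 2)); [ring|].
    rewrite Hs; ring.
Qed.

Lemma Cmod_eigvec_plus : Cmod eigvec_plus = Cmod eigvec_minus.
Proof.
  unfold Cmod, eigvec_plus, eigvec_minus; cbn [fst snd]. f_equal. ring.
Qed.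

End Spectrum.

(* [U], [V] bound the two mode coefficients, [x], [y] are the decay factors [e^(-s t)],
   [e^(-s (T - t))] and [P], [Q] the moduli of the data. *)
Lemma two_sided_decay (G w n P Q U V x y : R) :
  0 <= G -> 0 <= w -> 0 <= n -> 0 <= P -> 0 <= Q -> 0 <= U ->
  0 <= x <= 1 -> 0 <= y <= 1 ->
  n * U <= w * (P + G * n * (x * y) * Q) -> V <= Q + U * (x * y) ->
  (G + 1) * (n * (U * x + V * y)) <=
  (G + 1) * (2 * w + 2 * w * G + 1) * (x * P + y * (n * Q)).
Proof.
  intros HG Hw Hn HP HQ HU Hx Hy HnU HV.
  assert (HwGnQ : 0 <= w * G * (n * Q)) by (repeat apply Rmult_le_pos; lra).
  assert (HUx : n * U * x <= w * P * x + w * G * (n * Q) * y).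
  { assert (n * U * x <= w * (P + G * n * (x * y) * Q) * x) by (apply Rmult_le_compat_r; lra).
    assert (w * G * (n * Q) * y * (x * x) <= w * G * (n * Q) * y * 1)
      by (apply Rmult_le_compat_l; nra).
    lra. }
  assert (HVy : n * V * y <= n * Q * y + n * U * x).
  { assert (n * V * y <= n * (Q + U * (x * y)) * y)
      by (apply Rmult_le_compat_r; [lra | apply Rmult_le_compat_l; lra]).
    assert (n * U * x * (y * y) <= n * U * x * 1)
      by (apply Rmult_le_compat_l; [repeat apply Rmult_le_pos; lra | nra]).
    lra. }
  assert (0 <= x * P) by (apply Rmult_le_pos; lra).
  assert (0 <= w * G * (x * P)) by (repeat apply Rmult_le_pos; lra).
  assert (0 <= w * (y * (n * Q))) by (repeat apply Rmult_le_pos; lra).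
  rewrite Rmult_assoc. apply Rmult_le_compat_l; lra.
Qed.

Section SpectralEstimates.

Variables (rho_m rb s c T : R) (xi : R * R) (a b : C).
Hypotheses (Hflux : 0 < flux rho_m rb) (Hrb : 0 <= rb) (Hs0 : 0 < s)
  (Hs : s * s = rb * (flux rho_m rb * xnorm xi ^ 2 - rb * fst xi ^ 2)).

Local Notation l1 := (eigval_minus rho_m rb s xi).
Local Notation l2 := (eigval_plus rho_m rb s xi).
Local Notation e1 := (eigvec_minus rho_m rb s xi).
Local Notation e2 := (eigvec_plus rho_m rb s xi).
Local Notation A := (bvp_coef1 T l1 l2 e1 e2 a b).
Local Notation B := (bvp_coef2 T l1 l2 e1 e2 a b).
Local Notation G := (flux rho_m rb * sqrt (rb * flux rho_m rb)).
Local Notation w := (/ (flux rho_m rb * c)).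

Lemma spectral_den_neq0 : bvp_den T l1 l2 e1 e2 <> 0%C.
Proof.
  apply Cmod_gt_0. eapply Rlt_le_trans.
  - apply Rmult_lt_0_compat; [exact Hflux | exact Hs0].
  - exact (bvp_den_spectrum_lower rho_m rb s xi Hflux T Hs0).
Qed.

Lemma spectral_coef1_bound :
  flux rho_m rb * s * Cmod A <= Cmod a + G * xnorm xi * exp (- (s * T)) * Cmod b.
Proof.
  apply Rle_trans with (Cmod (bvp_den T l1 l2 e1 e2) * Cmod A).
  { apply Rmult_le_compat_r; [apply Cmod_ge_0|].
    exact (bvp_den_spectrum_lower rho_m rb s xi Hflux T Hs0). }
  unfold bvp_coef1. rewrite Cmod_div by exact spectral_den_neq0.
  pose proof spectral_den_neq0 as Hden. apply Cmod_gt_0 in Hden.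
  replace (_ * (_ / _)) with (Cmod (a - e2 * Cexp (l2 * RtoC (- T)) * b)) by (field; lra).
  unfold Cminus. eapply Rle_trans; [apply Cmod_triangle|].
  rewrite Cmod_opp, !Cmod_mult, Cmod_Cexp_mul_RtoC, Cmod_eigvec_plus,
    (Cmod_eigvec_minus rho_m rb s xi Hflux Hs Hrb).
  unfold eigval_plus, Re; cbn [fst]. rewrite <- Ropp_mult_distr_r. lra.
Qed.

Lemma spectral_coef2_bound : Cmod B <= Cmod b + Cmod A * exp (- (s * T)).
Proof.
  unfold bvp_coef2, Cminus. eapply Rle_trans; [apply Cmod_triangle|].
  rewrite Cmod_opp, Cmod_mult, Cmod_Cexp_mul_RtoC.
  unfold eigval_minus, Re; cbn [fst]. rewrite Ropp_mult_distr_l. lra.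
Qed.

Lemma spectral_solution_bound (t : R) :
  Cmod (bvp_psi T l1 l2 e1 e2 a b t) + xnorm xi * Cmod (bvp_phi T l1 l2 e1 e2 a b t) <=
  (G + 1) * (xnorm xi * (Cmod A * exp (- (s * t)) + Cmod B * exp (- (s * (T - t))))).
Proof.
  pose proof (Cmod_superpose_psi l1 l2 e1 e2 0 T A B t) as Hpsi.
  pose proof (Cmod_superpose_phi l1 l2 0 T A B t) as Hphi.
  rewrite Cmod_eigvec_plus, (Cmod_eigvec_minus rho_m rb s xi Hflux Hs Hrb) in Hpsi.
  replace (Re l1 * (t - 0)) with (- (s * t)) in Hpsi, Hphi by (unfold Re; cbn; ring).
  replace (Re l2 * (t - T)) with (- (s * (T - t))) in Hpsi, Hphi by (unfold Re; cbn; ring).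
  apply Rmult_le_compat_l with (r := xnorm xi) in Hphi; [|apply xnorm_nonneg].
  unfold bvp_psi, bvp_phi. lra.
Qed.

Hypotheses (Hc : 0 < c) (Hcs : c * xnorm xi <= s).

Lemma spectral_coef1_scaled :
  xnorm xi * Cmod A <= w * (Cmod a + G * xnorm xi * exp (- (s * T)) * Cmod b).
Proof.
  assert (Hw : 0 < w) by (apply Rinv_0_lt_compat, Rmult_lt_0_compat; lra).
  apply Rle_trans with (w * (flux rho_m rb * s * Cmod A)).
  - replace (w * (flux rho_m rb * s * Cmod A)) with (s / c * Cmod A) by (field; lra).
    apply Rmult_le_compat_r; [apply Cmod_ge_0|].
    apply (Rmult_le_reg_l c); [exact Hc|].
    replace (c * (s / c)) with s by (field; lra). exact Hcs.
  - apply Rmult_le_compat_l; [lra | exact spectral_coef1_bound].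
Qed.

Lemma spectral_estimate (t : R) :
  0 <= t <= T ->
  Cmod (bvp_psi T l1 l2 e1 e2 a b t) + xnorm xi * Cmod (bvp_phi T l1 l2 e1 e2 a b t) <=
  (G + 1) * (2 * w + 2 * w * G + 1) *
    (exp (- (s * t)) * Cmod a + exp (- (s * (T - t))) * (xnorm xi * Cmod b)).
Proof.
  intros Ht.
  assert (Hxy : exp (- (s * T)) = exp (- (s * t)) * exp (- (s * (T - t))))
    by (rewrite <- exp_plus; f_equal; ring).
  assert (Hexp : forall r, 0 <= r -> 0 <= exp (- (s * r)) <= 1).
  { intros r Hr. split; [left; apply exp_pos|].
    rewrite <- exp_0. apply exp_le_compat. nra. }
  eapply Rle_trans; [apply spectral_solution_bound|].
  pose proof spectral_coef1_scaled as HA. pose proof spectral_coef2_bound as HB.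
  rewrite Hxy in HA, HB.
  apply two_sided_decay;
    [ apply Rmult_le_pos; [lra | apply sqrt_pos]
    | left; apply Rinv_0_lt_compat, Rmult_lt_0_compat; lra
    | apply xnorm_nonneg | apply Cmod_ge_0 | apply Cmod_ge_0 | apply Cmod_ge_0
    | apply Hexp; lra | apply Hexp; lra | exact HA | exact HB ].
Qed.

End SpectralEstimates.

Definition decay_rate (rho_m rb : R) (xi : R * R) : R :=
  sqrt (rb * (flux rho_m rb * xnorm xi ^ 2 - rb * fst xi ^ 2)).

Definition decay_const (rho_m rb : R) : R := sqrt (rb * (flux rho_m rb - rb)).

Definition estimate_const (rho_m rb : R) : R :=
  let G := flux rho_m rb * sqrt (rb * flux rho_m rb) in
  let w := / (flux rho_m rb * decay_const rho_m rb) in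
  (G + 1) * (2 * w + 2 * w * G + 1).

(* At [xi = 0] the system is not required to hold, and the zero function meets the estimate. *)
Definition freq_psi (rho_m rb T : R) (xi : R * R) (a b : C) : R -> C :=
  let s := decay_rate rho_m rb xi in
  if Req_EM_T (xnorm xi) 0 then fun _ => 0%C
  else bvp_psi T (eigval_minus rho_m rb s xi) (eigval_plus rho_m rb s xi)
         (eigvec_minus rho_m rb s xi) (eigvec_plus rho_m rb s xi) a b.

Definition freq_phi (rho_m rb T : R) (xi : R * R) (a b : C) : R -> C :=
  let s := decay_rate rho_m rb xi in
  if Req_EM_T (xnorm xi) 0 then fun _ => 0%C
  else bvp_phi T (eigval_minus rho_m rb s xi) (eigval_plus rho_m rb s xi)
         (eigvec_minus rho_m rb s xi) (eigvec_plus rho_m rb s xi) a b.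

Section Frequency.

Variables (rho_m rb T : R).
Hypotheses (Hrb : 0 < rb) (Hflux : rb < flux rho_m rb).

Lemma decay_rate_sq (xi : R * R) :
  decay_rate rho_m rb xi * decay_rate rho_m rb xi =
  rb * (flux rho_m rb * xnorm xi ^ 2 - rb * fst xi ^ 2).
Proof.
  apply sqrt_sqrt. pose proof (fst_sq_le_xnorm_sq xi). pose proof (pow2_ge_0 (fst xi)).
  apply Rmult_le_pos; nra.
Qed.

Lemma decay_const_pos : 0 < decay_const rho_m rb.
Proof. apply sqrt_lt_R0. nra. Qed.

Lemma decay_const_le (xi : R * R) : decay_const rho_m rb * xnorm xi <= decay_rate rho_m rb xi.
Proof.
  unfold decay_const, decay_rate.
  rewrite <- (sqrt_pow2 (xnorm xi)) at 1 by apply xnorm_nonneg.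
  rewrite <- sqrt_mult_alt by nra.
  apply sqrt_le_1_alt. pose proof (fst_sq_le_xnorm_sq xi). nra.
Qed.

Lemma decay_rate_pos (xi : R * R) : 0 < xnorm xi -> 0 < decay_rate rho_m rb xi.
Proof.
  intros Hn. eapply Rlt_le_trans; [|apply decay_const_le].
  apply Rmult_lt_0_compat; [apply decay_const_pos | exact Hn].
Qed.

Lemma estimate_const_pos : 0 < estimate_const rho_m rb.
Proof.
  unfold estimate_const.
  assert (0 <= flux rho_m rb * sqrt (rb * flux rho_m rb))
    by (apply Rmult_le_pos; [lra | apply sqrt_pos]).
  assert (0 < / (flux rho_m rb * decay_const rho_m rb))
    by (apply Rinv_0_lt_compat, Rmult_lt_0_compat; [lra | apply decay_const_pos]).
  assert (0 <= / (flux rho_m rb * decay_const rho_m rb) *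
               (flux rho_m rb * sqrt (rb * flux rho_m rb)))
    by (apply Rmult_le_pos; lra).
  apply Rmult_lt_0_compat; lra.
Qed.

Lemma freq_solves (xi : R * R) (a b : C) :
  xi <> (0, 0) ->
  solves_freq rho_m rb T xi a b (freq_psi rho_m rb T xi a b) (freq_phi rho_m rb T xi a b).
Proof.
  intros Hxi. pose proof (xnorm_pos xi Hxi) as Hn.
  unfold freq_psi, freq_phi. destruct (Req_EM_T (xnorm xi) 0) as [H0 | _]; [lra|].
  apply bvp_solves.
  - apply eigenmode_minus; [lra | apply decay_rate_sq].
  - apply eigenmode_plus; [lra | apply decay_rate_sq].
  - apply spectral_den_neq0; [lra | apply decay_rate_pos, Hn].
Qed.

Lemma freq_estimate (xi : R * R) (a b : C) (t : R) :
  0 <= t <= T ->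
  Cmod (freq_psi rho_m rb T xi a b t) + xnorm xi * Cmod (freq_phi rho_m rb T xi a b t) <=
  estimate_const rho_m rb *
    (exp (- decay_const rho_m rb * xnorm xi * t) * Cmod a
     + exp (- decay_const rho_m rb * xnorm xi * (T - t)) * (xnorm xi * Cmod b)).
Proof.
  intros Ht. pose proof estimate_const_pos as HK. pose proof (xnorm_nonneg xi) as Hn0.
  unfold freq_psi, freq_phi. destruct (Req_EM_T (xnorm xi) 0) as [H0 | H0].
  - rewrite Cmod_0, H0, !Rmult_0_l, Rplus_0_r.
    apply Rmult_le_pos; [lra|].
    apply Rplus_le_le_0_compat; apply Rmult_le_pos;
      [left; apply exp_pos | apply Cmod_ge_0 | left; apply exp_pos | lra].
  - assert (Hn : 0 < xnorm xi) by lra.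
    pose proof (decay_const_le xi) as Hcs.
    eapply Rle_trans.
    { apply (spectral_estimate rho_m rb (decay_rate rho_m rb xi) (decay_const rho_m rb));
        [lra | lra | apply decay_rate_pos, Hn | apply decay_rate_sq
        | apply decay_const_pos | exact Hcs | exact Ht]. }
    apply Rmult_le_compat_l; [lra|].
    apply Rplus_le_compat; apply Rmult_le_compat_r;
      [apply Cmod_ge_0 | apply exp_le_compat; nra
      | apply Rmult_le_pos; [lra | apply Cmod_ge_0] | apply exp_le_compat; nra].
Qed.

End Frequency.

Theorem lemma5 (rho_m rb : R) (Hm : 0 < rho_m) (Hrb : 0 < rb) (Hrb2 : rb < rho_m / 2) :
  exists K c : R, 0 < K /\ 0 < c /\
    forall (T : R), 0 < T ->
    forall (psi0_hat phiT_hat : R * R -> C),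
    exists psi_hat phi_hat : R * R -> R -> C,
      (forall xi : R * R, xi <> (0, 0) ->
         solves_freq rho_m rb T xi (psi0_hat xi) (phiT_hat xi)
                     (psi_hat xi) (phi_hat xi)) /\
      (forall (xi : R * R) (t : R), 0 <= t <= T ->
         Cmod (psi_hat xi t) + xnorm xi * Cmod (phi_hat xi t) <=
         K * (exp (- c * xnorm xi * t) * Cmod (psi0_hat xi)
              + exp (- c * xnorm xi * (T - t)) * (xnorm xi * Cmod (phiT_hat xi)))).
Proof.
  (* [Hm] is implied by the other two hypotheses. *)
  assert (Hflux : rb < flux rho_m rb) by (unfold flux; lra).
  exists (estimate_const rho_m rb), (decay_const rho_m rb).
  split; [apply estimate_const_pos; assumption|].
  split; [apply decay_const_pos; assumption|].
  intros T _ psi0_hat phiT_hat.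
  exists (fun xi => freq_psi rho_m rb T xi (psi0_hat xi) (phiT_hat xi)),
         (fun xi => freq_phi rho_m rb T xi (psi0_hat xi) (phiT_hat xi)).
  split.
  - intros xi Hxi. apply freq_solves; assumption.
  - intros xi t Ht. apply freq_estimate; assumption.
Qed.
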